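(* Let $G$ be an undirected graph on $n$ vertices with double cover $H$, let $W$ be the lazy random walk matrix of $H$, and let $\sigma$ be the simplify operator. Then: (i) $\sigma\circ(c\cdot p)=c\cdot(\sigma\circ p)$ for all $p\in\mathbb{R}^{2n}_{\ge0}$ and $c\in\mathbb{R}_{\ge0}$; (ii) $\sigma\circ(a+b)\preceq\sigma\circ a+\sigma\circ b$ for all $a,b\in\mathbb{R}^{2n}_{\ge0}$; (iii) $\sigma\circ(pW)\preceq(\sigma\circ p)W$ for all $p\in\mathbb{R}^{2n}_{\ge0}$.
   Context: The double cover $H$ has vertices $v_1,v_2$ for each $v\in V_G$ and edges $\{u_1,v_2\},\{u_2,v_1\}$ for each $\{u,v\}\in E_G$. Vectors are row vectors indexed by $V_H$. $W=\frac12(I+D_H^{-1}A_H)$ with $D_H$ the degree matrix and $A_H$ the adjacency matrix of $H$. The simplify operator $\sigma:\mathbb{R}^{2n}_{\ge0}\to\mathbb{R}^{2n}_{\ge0}$ is $(\sigma\circ p)(u_1)=\max(0,p(u_1)-p(u_2))$, $(\sigma\circ p)(u_2)=\max(0,p(u_2)-p(u_1))$ for every $u\in V_G$. $x\preceq y$ means $x(v)\le y(v)$ for every coordinate $v$. *)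

From HB Require Import structures.
From mathcomp Require Import all_boot all_order all_algebra.
Set Implicit Arguments. Unset Strict Implicit. Unset Printing Implicit Defensive.
Import Order.TTheory GRing.Theory Num.Theory.
Local Open Scope ring_scope.

(* Vertices of G are 'I_n; G is given by an edge relation e.
   Vertices of the double cover H are indexed by 'I_(n + n):
   lshift n u  is the copy u_1,  rshift n u  is the copy u_2. *)

Section DoubleCover.
Variables (R : realFieldType) (n : nat) (e : rel 'I_n).

Definition adjH : 'M[R]_(n + n) :=
  \matrix_(i, j)
    match split i, split j with
    | inl u, inr v => (e u v)%:R
    | inr u, inl v => (e u v)%:R
    | _, _ => 0
    end.

Definition degH (i : 'I_(n + n)) : R := \sum_(j < n + n) adjH i j.

(* inverse degree matrix D_H^{-1} (entry 0^-1 = 0 for isolated vertices) *)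
Definition invdegH : 'M[R]_(n + n) := \matrix_(i, j) ((i == j)%:R * (degH i)^-1).

Definition lazyW : 'M[R]_(n + n) := 2^-1 *: (1%:M + invdegH *m adjH).

End DoubleCover.

Definition simplify (R : realFieldType) (n : nat) (p : 'rV[R]_(n + n)) : 'rV[R]_(n + n) :=
  \row_i match split i with
         | inl u => Num.max 0 (p 0 (lshift n u) - p 0 (rshift n u))
         | inr u => Num.max 0 (p 0 (rshift n u) - p 0 (lshift n u))
         end.

Definition vle (R : realFieldType) (m : nat) (x y : 'rV[R]_m) : Prop :=
  forall i, x 0 i <= y 0 i.

Definition nonneg (R : realFieldType) (m : nat) (x : 'rV[R]_m) : Prop :=
  forall i, 0 <= x 0 i.

From HB Require Import structures.
From mathcomp Require Import all_boot all_order all_algebra lra.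
Import Order.TTheory GRing.Theory Num.Theory.
Local Open Scope ring_scope.
Set Implicit Arguments. Unset Strict Implicit.

(* Let s be the involution exchanging the two copies u_1, u_2 of each vertex,
   and write d p := p - p o s.  Then simplify p = max(0, d p) coordinatewise,
   so simplify p is nonnegative with d (simplify p) = d p.  The walk matrix W
   is invariant under s on both indices, hence
   d (p W) = (d p) W = d ((simplify p) W).  As (simplify p) W is nonnegative
   and max(0, q i - q (s i)) <= q i for q >= 0, (iii) follows; (i) and (ii)
   are properties of the positive part x |-> max(0, x). *)

Section PositivePart.
Variable R : realFieldType.
Implicit Types x y z : R.

Lemma maxr0_addr_le x y : Num.max 0 (x + y) <= Num.max 0 x + Num.max 0 y.
Proof. by case: (lerP 0 x); case: (lerP 0 y); case: (lerP 0 (x + y)); lra. Qed.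

Lemma maxr0_subN z : Num.max 0 z - Num.max 0 (- z) = z.
Proof. by case: (lerP 0 z); case: (lerP 0 (- z)); lra. Qed.

Lemma maxr0_subr_le x y : 0 <= x -> 0 <= y -> Num.max 0 (x - y) <= x.
Proof. by case: (lerP 0 (x - y)); lra. Qed.

End PositivePart.

Section SwapCopy.
Variable n : nat.
Implicit Types i j : 'I_(n + n).

Definition swap_copy i : 'I_(n + n) :=
  match split i with inl u => rshift n u | inr u => lshift n u end.

Lemma split_lshift (u : 'I_n) : split (lshift n u) = inl u.
Proof. exact: (unsplitK (inl u)). Qed.

Lemma split_rshift (u : 'I_n) : split (rshift n u) = inr u.
Proof. exact: (unsplitK (inr u)). Qed.

Lemma split_swap_copy i :
  split (swap_copy i) = match split i with inl u => inr u | inr u => inl u end.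
Proof.
by rewrite /swap_copy; case: (split i) => u; rewrite ?split_lshift ?split_rshift.
Qed.

Lemma swap_copyK : involutive swap_copy.
Proof.
move=> i; rewrite {1}/swap_copy split_swap_copy.
by case: (split_ordP i) => u ->; rewrite ?split_lshift ?split_rshift.
Qed.

Lemma swap_copy_inj : injective swap_copy.
Proof. exact: inv_inj swap_copyK. Qed.

End SwapCopy.

Section Simplify.
Variables (R : realFieldType) (n : nat).
Implicit Types p a b : 'rV[R]_(n + n).

Lemma simplifyE p i : simplify p 0 i = Num.max 0 (p 0 i - p 0 (swap_copy i)).
Proof. by rewrite mxE /swap_copy; case: (split_ordP i) => u ->. Qed.

Lemma simplify_ge0 p : nonneg (simplify p).
Proof. by move=> i; rewrite simplifyE le_max lexx. Qed.

Lemma simplify_swap_diff p i :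
  simplify p 0 i - simplify p 0 (swap_copy i) = p 0 i - p 0 (swap_copy i).
Proof.
by rewrite !simplifyE swap_copyK -[p 0 (swap_copy i) - _]opprB maxr0_subN.
Qed.

Lemma simplifyZ p c : 0 <= c -> simplify (c *: p) = c *: simplify p.
Proof.
move=> c_ge0; apply/rowP => i.
by rewrite simplifyE [RHS]mxE simplifyE !mxE -mulrBr maxr_pMr // mulr0.
Qed.

Lemma simplifyD_le a b : vle (simplify (a + b)) (simplify a + simplify b).
Proof.
move=> i; rewrite [X in _ <= X]mxE !simplifyE !mxE opprD addrACA.
exact: maxr0_addr_le.
Qed.

End Simplify.

Section SwapInvariantMatrix.
Variables (R : realFieldType) (n : nat) (M : 'M[R]_(n + n)).
Hypothesis M_ge0 : forall i j, 0 <= M i j.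
Hypothesis M_swap : forall i j, M (swap_copy i) (swap_copy j) = M i j.

Lemma mulmx_swap_diff (r : 'rV[R]_(n + n)) j :
  (r *m M) 0 j - (r *m M) 0 (swap_copy j) =
  \sum_i (r 0 i - r 0 (swap_copy i)) * M i j.
Proof.
rewrite !mxE [X in _ - X](reindex_inj (@swap_copy_inj n)) -sumrB.
by apply: eq_bigr => i _; rewrite M_swap mulrBl.
Qed.

Lemma mulmx_nonneg (r : 'rV[R]_(n + n)) : nonneg r -> nonneg (r *m M).
Proof. by move=> r_ge0 j; rewrite mxE; apply: sumr_ge0 => i _; apply: mulr_ge0. Qed.

Lemma simplify_mulmx_le (p : 'rV[R]_(n + n)) :
  vle (simplify (p *m M)) (simplify p *m M).
Proof.
move=> j; rewrite simplifyE.
have -> : (p *m M) 0 j - (p *m M) 0 (swap_copy j) =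
          (simplify p *m M) 0 j - (simplify p *m M) 0 (swap_copy j).
  by rewrite !mulmx_swap_diff; apply: eq_bigr => i _; rewrite simplify_swap_diff.
by apply: maxr0_subr_le; apply: mulmx_nonneg; apply: simplify_ge0.
Qed.

End SwapInvariantMatrix.

Section LazyWalk.
Variables (R : realFieldType) (n : nat) (e : rel 'I_n).
Implicit Types i j : 'I_(n + n).

Lemma adjH_ge0 i j : 0 <= adjH R e i j.
Proof. by rewrite mxE; case: (split i) => u; case: (split j) => v. Qed.

Lemma adjH_swap i j : adjH R e (swap_copy i) (swap_copy j) = adjH R e i j.
Proof. by rewrite !mxE !split_swap_copy; case: (split i) => u; case: (split j). Qed.

Lemma degH_swap i : degH R e (swap_copy i) = degH R e i.
Proof.
rewrite /degH (reindex_inj (@swap_copy_inj n)).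
by apply: eq_bigr => j _; rewrite adjH_swap.
Qed.

Lemma lazyWE i j :
  lazyW R e i j = 2^-1 * ((i == j)%:R + (degH R e i)^-1 * adjH R e i j).
Proof.
rewrite !mxE (bigD1 i) //= big1 => [|k /negbTE ki]; last by rewrite mxE eq_sym ki !mul0r.
by rewrite !mxE eqxx mul1r addr0.
Qed.

Lemma lazyW_ge0 i j : 0 <= lazyW R e i j.
Proof.
have degH_ge0 : 0 <= degH R e i by apply: sumr_ge0 => k _; apply: adjH_ge0.
rewrite lazyWE; apply: mulr_ge0; first by rewrite invr_ge0.
by apply: addr_ge0 => //; apply: mulr_ge0; rewrite ?invr_ge0 ?adjH_ge0.
Qed.

Lemma lazyW_swap i j : lazyW R e (swap_copy i) (swap_copy j) = lazyW R e i j.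
Proof. by rewrite !lazyWE adjH_swap degH_swap (inj_eq (@swap_copy_inj n)). Qed.

End LazyWalk.

Theorem lemma3 (R : realFieldType) (n : nat) (e : rel 'I_n)
  (e_sym : symmetric e) (e_irr : irreflexive e) :
  (forall (p : 'rV[R]_(n + n)) (c : R), nonneg p -> 0 <= c ->
      simplify (c *: p) = c *: simplify p) /\
  (forall a b : 'rV[R]_(n + n), nonneg a -> nonneg b ->
      vle (simplify (a + b)) (simplify a + simplify b)) /\
  (forall p : 'rV[R]_(n + n), nonneg p ->
      vle (simplify (p *m lazyW R e)) (simplify p *m lazyW R e)).
Proof.
split; [|split].
- by move=> p c _; apply: simplifyZ.
- by move=> a b _ _; apply: simplifyD_le.
- by move=> p _; apply: simplify_mulmx_le; [apply: lazyW_ge0 | apply: lazyW_swap].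
Qed.
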